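(* (Unconditional stability, 2D multiplicative kernel.) Let $\mathcal A^{\times}=\mathcal D_x\otimes\mathcal D_y-\mathcal G_x\otimes\mathcal G_y$ be the two-dimensional collocation matrix for the multiplicative kernel (see context), $T>0$, $N\ge1$, $\tau=T/N$, and $C_d=\frac{4(b-a)^{1-\gamma}(d-c)^{1-\gamma}}{(1-\gamma)^2}$. If vectors $\varepsilon^0,\dots,\varepsilon^N$ (indexed by $\{1,\dots,2M_x-1\}\times\{1,\dots,2M_y-1\}$) satisfy $$\Big(I+\frac{\tau}{2}\mathcal A^{\times}\Big)\varepsilon^k=\Big(I-\frac{\tau}{2}\mathcal A^{\times}\Big)\varepsilon^{k-1},\qquad k=1,\dots,N,$$ then $\|\varepsilon^k\|_\infty\le e^{TC_d}\|\varepsilon^0\|_\infty$ for all $k=0,\dots,N$, for every $M_x,M_y\ge2$ and every $\tau$.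
   Context: Fix $\gamma\in(0,1)$. For an interval $[\alpha,\beta]$ and an integer $m\ge2$ let $h=(\beta-\alpha)/m$, $x_s=\alpha+sh$ ($s\in\{0,\tfrac12,\dots,m\}$), and let $\phi_{s}$ be the piecewise quadratic Lagrange basis: for integers $0\le l\le m$, $\phi_l(x)=\frac{x-x_{l-1}}{h}\cdot\frac{2x-(x_l+x_{l-1})}{h}$ on $[x_{l-1},x_l]\cap[\alpha,\beta]$, $\phi_l(x)=\frac{x_{l+1}-x}{h}\cdot\frac{(x_{l+1}+x_l)-2x}{h}$ on $[x_l,x_{l+1}]\cap[\alpha,\beta]$, $0$ otherwise; for $l=1,\dots,m$, $\phi_{l-\frac12}(x)=\frac{4(x-x_{l-1})(x_l-x)}{h^2}$ on $[x_{l-1},x_l]$, $0$ otherwise. The associated 1D matrices are $\mathcal D=\mathrm{diag}(d_1,\dots,d_{2m-1})$ and $\mathcal G=(g_{ij})_{i,j=1}^{2m-1}$ with $d_i=\int_\alpha^\beta|x_{i/2}-y|^{-\gamma}dy$ and $g_{ij}=\int_\alpha^\beta\phi_{j/2}(y)|x_{i/2}-y|^{-\gamma}dy$. The following fact, established in earlier work, may be used: all $g_{ij}>0$ and $\mathcal D-\mathcal G$ is strictly diagonally dominant by rows. For $a<b$, $c<d$, $M_x,M_y\ge2$: $\mathcal D_x,\mathcal G_x$ are these matrices for $[a,b]$, $m=M_x$, and $\mathcal D_y,\mathcal G_y$ for $[c,d]$, $m=M_y$, and $\mathcal A^{\times}=\mathcal D_x\otimes\mathcal D_y-\mathcal G_x\otimes\mathcal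 G_y$ (the collocation matrix of $u\mapsto\int_\Omega\frac{u(x,y)-u(\bar x,\bar y)}{|x-\bar x|^\gamma|y-\bar y|^\gamma}d\bar xd\bar y$, $\Omega=(a,b)\times(c,d)$). $\|v\|_\infty$ is the maximum absolute entry. *)

From Stdlib Require Import Reals Lra.
Open Scope R_scope.

Fixpoint sum1 (f : nat -> R) (n : nat) : R :=
  match n with O => 0 | S n' => sum1 f n' + f (S n') end.

(* max_{j=1}^{n} f j  (0 for n = 0; only used with n >= 1 and f >= 0) *)
Fixpoint max1 (f : nat -> R) (n : nat) : R :=
  match n with O => 0 | S O => f 1%nat | S n' => Rmax (max1 f n') (f (S n')) end.

Definition ker (gamma x y : R) : R := Rpower (Rabs (x - y)) (- gamma).

(* Improper (at the point s in [lo,hi]) integral of f over [lo,hi]: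
   I = lim_{e -> 0+} ( int_lo^{max lo (s-e)} f + int_{min hi (s+e)}^hi f ). *)
Definition sing_integral (f : R -> R) (lo hi s I : R) : Prop :=
  forall eps, eps > 0 -> exists delta, delta > 0 /\
    forall e, 0 < e < delta ->
      exists (p1 : Riemann_integrable f lo (Rmax lo (s - e)))
             (p2 : Riemann_integrable f (Rmin hi (s + e)) hi),
        Rabs (RiemannInt p1 + RiemannInt p2 - I) < eps.

(* mesh on [al,be] with m cells; node x_s for s = j/2 *)
Definition hstep (al be : R) (m : nat) : R := (be - al) / INR m.
Definition node (al be : R) (m : nat) (s : R) : R := al + s * hstep al be m.
Definition xhalf (al be : R) (m j : nat) : R := node al be m (INR j / 2).

Definition inI (lo hi x : R) : Prop := lo <= x <= hi.

Definition phi_node (al be : R) (m l : nat) (x : R) : R :=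
  let h := hstep al be m in
  let xl := node al be m (INR l) in
  let xlm := node al be m (INR l - 1) in
  let xlp := node al be m (INR l + 1) in
  if Rle_dec al x then if Rle_dec x be then
    if Rle_dec xlm x then if Rle_dec x xl then
      ((x - xlm) / h) * ((2 * x - (xl + xlm)) / h)
    else if Rle_dec x xlp then ((xlp - x) / h) * (((xlp + xl) - 2 * x) / h) else 0
    else 0
  else 0 else 0.

(* midpoint basis function phi_{l-1/2}, l in 1..m *)
Definition phi_mid (al be : R) (m l : nat) (x : R) : R :=
  let h := hstep al be m in
  let xl := node al be m (INR l) in
  let xlm := node al be m (INR l - 1) in
  if Rle_dec xlm x then if Rle_dec x xl then 4 * (x - xlm) * (xl - x) / (h * h) else 0 else 0.

Definition phi_half (al be : R) (m j : nat) (x : R) : R :=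
  if Nat.even j then phi_node al be m (Nat.div2 j) x
  else phi_mid al be m (Nat.div2 (S j)) x.

Definition is_Dvec (gamma al be : R) (m : nat) (d : nat -> R) : Prop :=
  forall i, (1 <= i <= 2 * m - 1)%nat ->
    sing_integral (fun y => ker gamma (xhalf al be m i) y) al be (xhalf al be m i) (d i).

Definition is_Gmat (gamma al be : R) (m : nat) (g : nat -> nat -> R) : Prop :=
  forall i j, (1 <= i <= 2 * m - 1)%nat -> (1 <= j <= 2 * m - 1)%nat ->
    sing_integral (fun y => phi_half al be m j y * ker gamma (xhalf al be m i) y)
      al be (xhalf al be m i) (g i j).

(* Action of A^x = D_x (x) D_y - G_x (x) G_y on a grid vector v (i,p) *)
Definition Amul (Mx My : nat) (dx dy : nat -> R) (gx gy : nat -> nat -> R)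
    (v : nat -> nat -> R) (i p : nat) : R :=
  dx i * dy p * v i p
  - sum1 (fun j => sum1 (fun q => gx i j * gy p q * v j q) (2 * My - 1)) (2 * Mx - 1).

Definition normInf (Mx My : nat) (v : nat -> nat -> R) : R :=
  max1 (fun i => max1 (fun p => Rabs (v i p)) (2 * My - 1)) (2 * Mx - 1).

(* The 1D diagonal entries d_i = int |x_{i/2} - y|^(-gamma) dy are bounded by
   2 (beta - alpha)^(1 - gamma) / (1 - gamma), and since every basis function is at
   most 1 while D - G is diagonally dominant with positive entries, each row sum
   of G is smaller than d_i.  Hence the G_x (x) G_y part of row (i, p) of A^x is at
   most the product of the two 1D row sums, which is below the diagonal entry
   P = dx_i dy_p <= C_d.  Reading the Crank-Nicolson step at an entry where
   |eps^k| is maximal then gives |eps^k| <= (1 + tau P) |eps^(k-1)|, and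
   (1 + tau C_d)^k <= exp (k tau C_d) <= exp (T C_d). *)

From Stdlib Require Import Reals Lra Lia.
From Coquelicot Require Import Coquelicot.
Open Scope R_scope.

Lemma sum1_ext (f g : nat -> R) (n : nat) :
  (forall j, (1 <= j <= n)%nat -> f j = g j) -> sum1 f n = sum1 g n.
Proof.
  induction n as [|n IH]; intros Hfg; simpl; [reflexivity|].
  rewrite IH, Hfg; [reflexivity | lia | intros; apply Hfg; lia].
Qed.

Lemma sum1_scal_l (c : R) (f : nat -> R) (n : nat) :
  sum1 (fun j => c * f j) n = c * sum1 f n.
Proof. induction n as [|n IH]; simpl; [ring | rewrite IH; ring]. Qed.

Lemma sum1_ge0 (f : nat -> R) (n : nat) :
  (forall j, (1 <= j <= n)%nat -> 0 <= f j) -> 0 <= sum1 f n.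
Proof.
  induction n as [|n IH]; intros Hf; simpl; [lra|].
  assert (0 <= f (S n)) by (apply Hf; lia).
  assert (0 <= sum1 f n) by (apply IH; intros; apply Hf; lia). lra.
Qed.

Lemma sum1_Rabs_le (f g : nat -> R) (n : nat) :
  (forall j, (1 <= j <= n)%nat -> Rabs (f j) <= g j) -> Rabs (sum1 f n) <= sum1 g n.
Proof.
  induction n as [|n IH]; intros Hfg; simpl; [rewrite Rabs_R0; lra|].
  eapply Rle_trans; [apply Rabs_triang|].
  apply Rplus_le_compat; [apply IH; intros; apply Hfg | apply Hfg]; lia.
Qed.

Lemma sum1_split_diag (f : nat -> R) (n i : nat) : (1 <= i <= n)%nat ->
  sum1 f n = f i + sum1 (fun j => if Nat.eq_dec j i then 0 else f j) n.
Proof.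
  induction n as [|n IH]; intros Hi; [lia|]. cbn [sum1].
  destruct (Nat.eq_dec (S n) i) as [<-|Hne].
  - rewrite (sum1_ext (fun j => if Nat.eq_dec j (S n) then 0 else f j) f); [ring|].
    intros j Hj. destruct (Nat.eq_dec j (S n)); [lia | reflexivity].
  - rewrite IH by lia. ring.
Qed.

Lemma sum1_tensor_Rabs_le (nx ny : nat) (a b : nat -> R) (v : nat -> nat -> R) (M : R) :
  (forall j, (1 <= j <= nx)%nat -> 0 <= a j) -> (forall q, (1 <= q <= ny)%nat -> 0 <= b q) ->
  (forall j q, (1 <= j <= nx)%nat -> (1 <= q <= ny)%nat -> Rabs (v j q) <= M) ->
  Rabs (sum1 (fun j => sum1 (fun q => a j * b q * v j q) ny) nx) <= sum1 a nx * sum1 b ny * M.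
Proof.
  intros Ha Hb Hv.
  assert (HbM : sum1 (fun q => b q * M) ny = sum1 b ny * M).
  { rewrite (sum1_ext _ (fun q => M * b q)), sum1_scal_l by (intros; ring). ring. }
  replace (sum1 a nx * sum1 b ny * M)
    with (sum1 (fun j => a j * sum1 (fun q => b q * M) ny) nx).
  2:{ rewrite HbM, (sum1_ext _ (fun j => (sum1 b ny * M) * a j)), sum1_scal_l
        by (intros; ring). ring. }
  apply sum1_Rabs_le; intros j Hj.
  rewrite <- sum1_scal_l. apply sum1_Rabs_le; intros q Hq.
  rewrite !Rabs_mult, (Rabs_right (a j)), (Rabs_right (b q)) by (apply Rle_ge; auto).
  rewrite Rmult_assoc. apply Rmult_le_compat_l; [auto|].
  apply Rmult_le_compat_l; auto.
Qed.

Lemma max1_ge (f : nat -> R) (n j : nat) : (1 <= j <= n)%nat -> f j <= max1 f n.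
Proof.
  induction n as [|[|n] IH]; intros Hj; [lia | replace j with 1%nat by lia; simpl; lra|].
  change (max1 f (S (S n))) with (Rmax (max1 f (S n)) (f (S (S n)))).
  destruct (Nat.eq_dec j (S (S n))) as [->|Hne]; [apply Rmax_r|].
  eapply Rle_trans; [apply IH; lia | apply Rmax_l].
Qed.

Lemma max1_attained (f : nat -> R) (n : nat) : (1 <= n)%nat ->
  exists j, (1 <= j <= n)%nat /\ max1 f n = f j.
Proof.
  induction n as [|[|n] IH]; intros Hn; [lia | exists 1%nat; split; [lia | reflexivity]|].
  change (max1 f (S (S n))) with (Rmax (max1 f (S n)) (f (S (S n)))).
  destruct (IH ltac:(lia)) as (j & Hj & Ej).
  unfold Rmax; destruct Rle_dec.
  - exists (S (S n)); split; [lia | reflexivity].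
  - exists j; split; [lia | exact Ej].
Qed.

Lemma normInf_ge (Mx My : nat) (v : nat -> nat -> R) (i p : nat) :
  (1 <= i <= 2 * Mx - 1)%nat -> (1 <= p <= 2 * My - 1)%nat -> Rabs (v i p) <= normInf Mx My v.
Proof.
  intros Hi Hp. unfold normInf.
  eapply Rle_trans; [apply (max1_ge (fun p => Rabs (v i p)) _ p Hp) | apply (max1_ge (fun i => max1 (fun p => Rabs (v i p)) (2 * My - 1)) _ i Hi)].
Qed.

Lemma normInf_attained (Mx My : nat) (v : nat -> nat -> R) : (1 <= Mx)%nat -> (1 <= My)%nat ->
  exists i p, (1 <= i <= 2 * Mx - 1)%nat /\ (1 <= p <= 2 * My - 1)%nat /\
    normInf Mx My v = Rabs (v i p).
Proof.
  intros HMx HMy. unfold normInf.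
  destruct (max1_attained (fun i => max1 (fun p => Rabs (v i p)) (2 * My - 1)) (2 * Mx - 1))
    as (i & Hi & ->); [lia|].
  destruct (max1_attained (fun p => Rabs (v i p)) (2 * My - 1)) as (p & Hp & ->); [lia|].
  exists i, p; auto.
Qed.

Lemma normInf_ge0 (Mx My : nat) (v : nat -> nat -> R) : (1 <= Mx)%nat -> (1 <= My)%nat ->
  0 <= normInf Mx My v.
Proof.
  intros. eapply Rle_trans; [apply (Rabs_pos (v 1%nat 1%nat)) | apply normInf_ge; lia].
Qed.

Lemma is_derive_Rpower_lin (a k s y : R) : 0 < k * (y - s) ->
  is_derive (fun t => Rpower (k * (t - s)) a) y (k * (a * Rpower (k * (y - s)) (a - 1))).
Proof.
  intro Hpos.
  apply (is_derive_comp (fun z => Rpower z a) (fun t => k * (t - s))).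
  - apply is_derive_Reals, derivable_pt_lim_power, Hpos.
  - auto_derive; [easy | ring].
Qed.

(* With [k = 1] (resp. [k = -1]) this integrates the kernel to the right (resp.
   left) of its singularity [s]. *)
Lemma is_RInt_ker (g k s u v : R) : g < 1 -> k * k = 1 -> u <= v ->
  (forall y, u <= y <= v -> 0 < k * (y - s)) ->
  is_RInt (ker g s) u v
    (k * (Rpower (k * (v - s)) (1 - g) - Rpower (k * (u - s)) (1 - g)) / (1 - g)).
Proof.
  intros Hg Hk Huv Hpos.
  set (F y := k / (1 - g) * Rpower (k * (y - s)) (1 - g)).
  replace (k * _ / _) with (minus (F v) (F u))
    by (unfold F, minus, plus, opp; simpl; field; lra).
  apply (is_RInt_ext (fun y => Rpower (k * (y - s)) (- g))).
  { intros y Hy. rewrite Rmin_left, Rmax_right in Hy by lra.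
    unfold ker. f_equal.
    assert (Habs : Rabs k = 1).
    { assert (Rabs k * Rabs k = 1) by (rewrite <- Rabs_mult, Hk; apply Rabs_R1).
      pose proof (Rabs_pos k). nra. }
    rewrite <- (Rabs_right (k * (y - s))) by (apply Rle_ge, Rlt_le, Hpos; lra).
    rewrite Rabs_mult, Habs, Rabs_minus_sym. ring. }
  apply (is_RInt_derive F); intros y Hy; rewrite Rmin_left, Rmax_right in Hy by lra.
  - unfold F.
    replace (Rpower (k * (y - s)) (- g))
      with (k / (1 - g) * (k * ((1 - g) * Rpower (k * (y - s)) (1 - g - 1)))).
    + apply is_derive_scal, is_derive_Rpower_lin, Hpos; lra.
    + replace (1 - g - 1) with (- g) by ring.
      replace (k / (1 - g) * (k * _)) with (k * k * Rpower (k * (y - s)) (- g)) by (field; lra).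
      rewrite Hk; ring.
  - apply (ex_derive_continuous (fun t => Rpower (k * (t - s)) (- g))).
    eexists. apply is_derive_Rpower_lin, Hpos; lra.
Qed.

Lemma RiemannInt_ker_below_le (g s lo u : R) (pr : Riemann_integrable (ker g s) lo u) :
  0 < g < 1 -> lo <= u < s -> RiemannInt pr <= Rpower (s - lo) (1 - g) / (1 - g).
Proof.
  intros Hg Hu.
  rewrite <- RInt_Reals, (is_RInt_unique _ _ _ _ (is_RInt_ker g (-1) s lo u ltac:(lra)
    ltac:(ring) ltac:(lra) ltac:(intros; lra))).
  replace (-1 * (lo - s)) with (s - lo) by ring.
  pose proof (exp_pos ((1 - g) * ln (-1 * (u - s)))).
  apply Rmult_le_compat_r; [apply Rlt_le, Rinv_0_lt_compat; lra|].
  unfold Rpower at 1; lra.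
Qed.

Lemma RiemannInt_ker_above_le (g s u hi : R) (pr : Riemann_integrable (ker g s) u hi) :
  0 < g < 1 -> s < u <= hi -> RiemannInt pr <= Rpower (hi - s) (1 - g) / (1 - g).
Proof.
  intros Hg Hu.
  rewrite <- RInt_Reals, (is_RInt_unique _ _ _ _ (is_RInt_ker g 1 s u hi ltac:(lra)
    ltac:(ring) ltac:(lra) ltac:(intros; lra))).
  rewrite !Rmult_1_l.
  pose proof (exp_pos ((1 - g) * ln (u - s))).
  apply Rmult_le_compat_r; [apply Rlt_le, Rinv_0_lt_compat; lra|].
  unfold Rpower at 2; lra.
Qed.

Lemma sing_integral_ker_le (g lo hi s I : R) : 0 < g < 1 -> lo < s < hi ->
  sing_integral (ker g s) lo hi s I -> I <= 2 * Rpower (hi - lo) (1 - g) / (1 - g).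
Proof.
  intros Hg Hs HI.
  apply le_epsilon; intros eps Heps.
  destruct (HI eps Heps) as (delta & Hdelta & Happrox).
  destruct (Happrox (delta / 2)) as (p1 & p2 & Hp); [lra|].
  apply Rabs_def2 in Hp.
  assert (Hleft := RiemannInt_ker_below_le g s lo _ p1 Hg
    (conj (Rmax_l _ _) (Rmax_lub_lt lo (s - delta / 2) s ltac:(lra) ltac:(lra)))).
  assert (Hright := RiemannInt_ker_above_le g s _ hi p2 Hg
    (conj (Rmin_glb_lt hi (s + delta / 2) s ltac:(lra) ltac:(lra)) (Rmin_l _ _))).
  assert (Hlo : Rpower (s - lo) (1 - g) <= Rpower (hi - lo) (1 - g))
    by (apply Rle_Rpower_l; lra).
  assert (Hhi : Rpower (hi - s) (1 - g) <= Rpower (hi - lo) (1 - g))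
    by (apply Rle_Rpower_l; lra).
  assert (Hinv : 0 <= / (1 - g)) by (apply Rlt_le, Rinv_0_lt_compat; lra).
  unfold Rdiv in *.
  pose proof (Rmult_le_compat_r _ _ _ Hinv Hlo).
  pose proof (Rmult_le_compat_r _ _ _ Hinv Hhi). lra.
Qed.

Lemma sing_integral_weighted_le (g lo hi s I J : R) (w : R -> R) :
  (forall y, w y <= 1) ->
  sing_integral (ker g s) lo hi s I ->
  sing_integral (fun y => w y * ker g s y) lo hi s J -> J <= I.
Proof.
  intros Hw HI HJ.
  apply le_epsilon; intros eps Heps.
  destruct (HI (eps / 2)) as (d1 & Hd1 & H1); [lra|].
  destruct (HJ (eps / 2)) as (d2 & Hd2 & H2); [lra|].
  set (e := Rmin d1 d2 / 2).
  assert (He : 0 < e < d1 /\ 0 < e < d2).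
  { pose proof (Rmin_glb_lt d1 d2 0 Hd1 Hd2). pose proof (Rmin_l d1 d2).
    pose proof (Rmin_r d1 d2). unfold e; lra. }
  destruct (H1 e) as (p1 & p2 & Hp); [lra|].
  destruct (H2 e) as (q1 & q2 & Hq); [lra|].
  assert (Hwk : forall y, w y * ker g s y <= ker g s y).
  { intro y. specialize (Hw y). assert (0 < ker g s y) by apply exp_pos. nra. }
  assert (RiemannInt q1 <= RiemannInt p1) by (apply RiemannInt_P19; [apply Rmax_l | auto]).
  assert (RiemannInt q2 <= RiemannInt p2) by (apply RiemannInt_P19; [apply Rmin_l | auto]).
  apply Rabs_def2 in Hp, Hq. lra.
Qed.

Lemma hstep_pos (al be : R) (m : nat) : al < be -> (1 <= m)%nat -> 0 < hstep al be m.
Proof. intros. apply Rdiv_lt_0_compat; [lra | apply lt_0_INR; lia]. Qed.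

Lemma node_succ (al be : R) (m : nat) (s : R) :
  node al be m (s + 1) = node al be m s + hstep al be m.
Proof. unfold node. ring. Qed.

(* On each half of its support [phi_l] is [t (2 t - 1)] with [t] in [0, 1]. *)
Lemma phi_node_le1 (al be : R) (m l : nat) (x : R) : al < be -> (1 <= m)%nat ->
  phi_node al be m l x <= 1.
Proof.
  intros Hab Hm. pose proof (hstep_pos al be m Hab Hm) as Hh.
  unfold phi_node; cbv zeta.
  assert (Hl := node_succ al be m (INR l - 1)). assert (Hlp := node_succ al be m (INR l)).
  replace (INR l - 1 + 1) with (INR l) in Hl by ring.
  set (h := hstep al be m) in *.
  set (xlm := node al be m (INR l - 1)) in *. set (xl := node al be m (INR l)) in *.
  rewrite Hlp, Hl. clearbody h xlm xl. subst xl.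
  assert (Hprod : forall a b, 0 <= a <= 1 -> b <= 1 -> a * b <= 1) by (intros; nra).
  repeat destruct Rle_dec; try lra; apply Hprod.
  all: try split; try apply Rdiv_le_0_compat; try apply (Rdiv_le_1 _ _ Hh); lra.
Qed.

Lemma phi_mid_le1 (al be : R) (m l : nat) (x : R) : al < be -> (1 <= m)%nat ->
  phi_mid al be m l x <= 1.
Proof.
  intros Hab Hm. pose proof (hstep_pos al be m Hab Hm) as Hh.
  unfold phi_mid; cbv zeta.
  assert (Hl := node_succ al be m (INR l - 1)).
  replace (INR l - 1 + 1) with (INR l) in Hl by ring.
  set (h := hstep al be m) in *.
  set (xlm := node al be m (INR l - 1)) in *. rewrite Hl. clearbody h xlm.
  repeat destruct Rle_dec; try lra.
  apply (Rdiv_le_1 _ (h * h)); [nra|].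
  pose proof (pow2_ge_0 (h - 2 * (x - xlm))). nra.
Qed.

Lemma phi_half_le1 (al be : R) (m j : nat) (x : R) : al < be -> (1 <= m)%nat ->
  phi_half al be m j x <= 1.
Proof.
  intros. unfold phi_half.
  destruct (Nat.even j); [apply phi_node_le1 | apply phi_mid_le1]; assumption.
Qed.

Lemma xhalf_interior (lo hi : R) (m i : nat) : lo < hi -> (1 <= i <= 2 * m - 1)%nat ->
  lo < xhalf lo hi m i < hi.
Proof.
  intros Hlh Hi. unfold xhalf, node, hstep.
  assert (Hi1 : 1 <= INR i) by (apply (le_INR 1); lia).
  assert (Hi2 : INR i + 1 <= 2 * INR m).
  { replace (2 * INR m) with (INR (2 * m)) by (rewrite mult_INR; reflexivity).
    rewrite <- S_INR. apply le_INR. lia. }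
  assert (Hq : 0 < (hi - lo) / (2 * INR m)) by (apply Rdiv_lt_0_compat; lra).
  assert (Hm : 2 * INR m * ((hi - lo) / (2 * INR m)) = hi - lo) by (field; lra).
  replace (lo + INR i / 2 * ((hi - lo) / INR m))
    with (lo + INR i * ((hi - lo) / (2 * INR m))) by (field; lra).
  nra.
Qed.

Lemma row_sum_lt_of_dominant (f : nat -> R) (dv : R) (n i : nat) : (1 <= i <= n)%nat ->
  (forall j, (1 <= j <= n)%nat -> 0 <= f j) -> f i <= dv ->
  Rabs (dv - f i) > sum1 (fun j => if Nat.eq_dec j i then 0 else Rabs (f j)) n ->
  sum1 f n < dv.
Proof.
  intros Hi Hf Hfi Hdom.
  rewrite Rabs_right in Hdom by lra.
  rewrite (sum1_ext _ (fun j => if Nat.eq_dec j i then 0 else f j)) in Hdom.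
  - rewrite (sum1_split_diag f n i Hi). lra.
  - intros j Hj. destruct (Nat.eq_dec j i); [reflexivity|].
    apply Rabs_right, Rle_ge, Hf, Hj.
Qed.

Lemma collocation_row_bounds (g lo hi : R) (m : nat) (dv : nat -> R) (gm : nat -> nat -> R)
    (i : nat) :
  0 < g < 1 -> lo < hi -> (1 <= m)%nat ->
  is_Dvec g lo hi m dv -> is_Gmat g lo hi m gm ->
  (forall j, (1 <= j <= 2 * m - 1)%nat -> 0 <= gm i j) ->
  Rabs (dv i - gm i i) > sum1 (fun j => if Nat.eq_dec j i then 0 else Rabs (gm i j)) (2 * m - 1) ->
  (1 <= i <= 2 * m - 1)%nat ->
  sum1 (gm i) (2 * m - 1) < dv i /\ dv i <= 2 * Rpower (hi - lo) (1 - g) / (1 - g).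
Proof.
  intros Hg Hlh Hm HD HG Hpos Hdom Hi.
  pose proof (xhalf_interior lo hi m i Hlh Hi) as Hs.
  split; [apply (row_sum_lt_of_dominant (gm i) _ _ i Hi Hpos); [|exact Hdom] |].
  - apply (sing_integral_weighted_le g lo hi (xhalf lo hi m i) _ _ (phi_half lo hi m i)).
    + intro y. apply phi_half_le1; assumption.
    + apply HD, Hi.
    + apply HG; exact Hi.
  - apply (sing_integral_ker_le g lo hi (xhalf lo hi m i)); [exact Hg | exact Hs | apply HD, Hi].
Qed.

(* Row (i, p) of the scheme at an entry [e] of maximal modulus of eps^k, with
   [Q], [Q'] the G_x (x) G_y parts applied to eps^k and eps^(k-1). *)
Lemma cn_scalar_step (tau P S e e' Q Q' Mk M0 : R) :
  0 <= tau -> 0 <= S <= P -> Rabs e = Mk -> Rabs e' <= M0 ->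
  Rabs Q <= S * Mk -> Rabs Q' <= S * M0 ->
  e + tau / 2 * (P * e - Q) = e' - tau / 2 * (P * e' - Q') ->
  Mk <= (1 + tau * P) * M0.
Proof.
  intros Htau HSP He He' HQ HQ' Hcn.
  assert (HMk : 0 <= Mk) by (rewrite <- He; apply Rabs_pos).
  assert (HM0 : 0 <= M0) by (eapply Rle_trans; [apply Rabs_pos | exact He']).
  assert (HtauP : 0 <= tau * P) by (apply Rmult_le_pos; lra).
  assert (Hsplit : e * (1 + tau * P / 2) = e' * (1 - tau * P / 2) + tau / 2 * (Q + Q')) by lra.
  assert (Hbound : Mk * (1 + tau * P / 2) <= M0 * (1 + tau * P / 2) + tau / 2 * (S * Mk + S * M0)).
  { replace (Mk * (1 + tau * P / 2)) with (Rabs (e * (1 + tau * P / 2)))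
      by (rewrite Rabs_mult, He, Rabs_right; lra).
    rewrite Hsplit.
    eapply Rle_trans; [apply Rabs_triang|].
    rewrite !Rabs_mult, (Rabs_right (tau / 2)) by lra.
    apply Rplus_le_compat.
    - apply Rmult_le_compat; try apply Rabs_pos; [exact He' | apply Rabs_le; lra].
    - apply Rmult_le_compat_l; [lra|].
      eapply Rle_trans; [apply Rabs_triang | lra]. }
  assert (Hgap : 0 <= tau * (P - S) * (1 + tau * P / 2) * M0)
    by (repeat apply Rmult_le_pos; nra).
  assert (Hneg : (Mk - (1 + tau * P) * M0) * (1 + tau * (P - S) / 2) <= 0) by nra.
  assert (HA : 0 < 1 + tau * (P - S) / 2) by nra.
  nra.
Qed.

Section CrankNicolsonStep.

Variables (Mx My : nat) (dx dy : nat -> R) (gx gy : nat -> nat -> R) (Bx By : R).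

Hypothesis Mx_pos : (1 <= Mx)%nat.
Hypothesis My_pos : (1 <= My)%nat.
Hypothesis gx_ge0 :
  forall i j, (1 <= i <= 2 * Mx - 1)%nat -> (1 <= j <= 2 * Mx - 1)%nat -> 0 <= gx i j.
Hypothesis gy_ge0 :
  forall p q, (1 <= p <= 2 * My - 1)%nat -> (1 <= q <= 2 * My - 1)%nat -> 0 <= gy p q.
Hypothesis gx_row_le : forall i, (1 <= i <= 2 * Mx - 1)%nat -> sum1 (gx i) (2 * Mx - 1) <= dx i.
Hypothesis gy_row_le : forall p, (1 <= p <= 2 * My - 1)%nat -> sum1 (gy p) (2 * My - 1) <= dy p.
Hypothesis dx_le : forall i, (1 <= i <= 2 * Mx - 1)%nat -> dx i <= Bx.
Hypothesis dy_le : forall p, (1 <= p <= 2 * My - 1)%nat -> dy p <= By.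

Lemma normInf_cn_step (tau : R) (u v : nat -> nat -> R) : 0 <= tau ->
  (forall i p, (1 <= i <= 2 * Mx - 1)%nat -> (1 <= p <= 2 * My - 1)%nat ->
     u i p + tau / 2 * Amul Mx My dx dy gx gy u i p
     = v i p - tau / 2 * Amul Mx My dx dy gx gy v i p) ->
  normInf Mx My u <= (1 + tau * (Bx * By)) * normInf Mx My v.
Proof.
  intros Htau Hcn.
  destruct (normInf_attained Mx My u Mx_pos My_pos) as (i & p & Hi & Hp & Hmax).
  set (Sx := sum1 (gx i) (2 * Mx - 1)). set (Sy := sum1 (gy p) (2 * My - 1)).
  assert (HSx : 0 <= Sx) by (apply sum1_ge0; intros; apply gx_ge0; assumption).
  assert (HSy : 0 <= Sy) by (apply sum1_ge0; intros; apply gy_ge0; assumption).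
  set (off w := sum1 (fun j => sum1 (fun q => gx i j * gy p q * w j q) (2 * My - 1))
                   (2 * Mx - 1)).
  assert (Hoff : forall w, Rabs (off w) <= Sx * Sy * normInf Mx My w).
  { intro w. apply sum1_tensor_Rabs_le.
    - intros; apply gx_ge0; assumption.
    - intros; apply gy_ge0; assumption.
    - intros; apply normInf_ge; assumption. }
  assert (Hdx : Sx <= dx i) by exact (gx_row_le i Hi).
  assert (Hdy : Sy <= dy p) by exact (gy_row_le p Hp).
  assert (HP : 0 <= Sx * Sy <= dx i * dy p) by (split; [nra | apply Rmult_le_compat; lra]).
  apply Rle_trans with ((1 + tau * (dx i * dy p)) * normInf Mx My v).
  - apply (cn_scalar_step tau (dx i * dy p) (Sx * Sy) (u i p) (v i p) (off u) (off v));
      try assumption; try apply Hoff.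
    + symmetry; exact Hmax.
    + apply normInf_ge; assumption.
    + exact (Hcn i p Hi Hp).
  - pose proof (dx_le i Hi). pose proof (dy_le p Hp).
    assert (dx i * dy p <= Bx * By) by (apply Rmult_le_compat; lra).
    apply Rmult_le_compat_r; [apply normInf_ge0; assumption | nra].
Qed.

End CrankNicolsonStep.

Lemma le_pow_of_step (u : nat -> R) (r : R) (N : nat) : 0 <= r ->
  (forall k, (1 <= k <= N)%nat -> u k <= r * u (k - 1)%nat) ->
  forall k, (k <= N)%nat -> u k <= r ^ k * u O.
Proof.
  intros Hr Hstep k. induction k as [|k IH]; intros Hk; [simpl; lra|].
  eapply Rle_trans; [apply Hstep; lia|].
  replace (S k - 1)%nat with k by lia. simpl. rewrite Rmult_assoc.
  apply Rmult_le_compat_l; [exact Hr | apply IH; lia].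
Qed.

Lemma pow_one_add_le_exp (x : R) (k : nat) : 0 <= x -> (1 + x) ^ k <= exp (INR k * x).
Proof.
  intros Hx. induction k as [|k IH]; [simpl; rewrite Rmult_0_l, exp_0; lra|].
  rewrite S_INR, Rmult_plus_distr_r, Rmult_1_l, exp_plus. simpl. rewrite Rmult_comm.
  apply Rmult_le_compat; [apply pow_le; lra | lra | exact IH | apply exp_ineq1_le].
Qed.

Lemma pow_time_step_le_exp (T C : R) (N k : nat) : 0 <= T -> 0 <= C -> (1 <= N)%nat ->
  (k <= N)%nat -> (1 + T / INR N * C) ^ k <= exp (T * C).
Proof.
  intros HT HC HN Hk.
  assert (HNpos : 0 < INR N) by (apply lt_0_INR; lia).
  assert (HkN : INR k / INR N <= 1) by (apply (Rdiv_le_1 _ _ HNpos), le_INR, Hk).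
  assert (Htau : 0 <= T / INR N) by (apply Rdiv_le_0_compat; lra).
  assert (HkT : INR k * (T / INR N * C) <= T * C).
  { replace (INR k * (T / INR N * C)) with (T * C * (INR k / INR N)) by (field; lra).
    pose proof (Rmult_le_pos _ _ HT HC). nra. }
  eapply Rle_trans; [apply pow_one_add_le_exp; nra|].
  destruct HkT as [Hlt | ->]; [apply Rlt_le, exp_increasing, Hlt | lra].
Qed.

Theorem theorem3p10 (gamma a b c d T : R) (Mx My N : nat)
  (dx dy : nat -> R) (gx gy : nat -> nat -> R) (eps : nat -> nat -> nat -> R) :
  0 < gamma < 1 -> a < b -> c < d -> (2 <= Mx)%nat -> (2 <= My)%nat ->
  0 < T -> (1 <= N)%nat ->
  is_Dvec gamma a b Mx dx -> is_Gmat gamma a b Mx gx ->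
  is_Dvec gamma c d My dy -> is_Gmat gamma c d My gy ->
  (* fact from earlier work (see context): g_ij > 0 and D - G strictly
     diagonally dominant by rows, for both 1D matrices *)
  (forall i j, (1 <= i <= 2 * Mx - 1)%nat -> (1 <= j <= 2 * Mx - 1)%nat -> 0 < gx i j) ->
  (forall i, (1 <= i <= 2 * Mx - 1)%nat ->
     Rabs (dx i - gx i i) > sum1 (fun j => if Nat.eq_dec j i then 0 else Rabs (gx i j)) (2 * Mx - 1)) ->
  (forall i j, (1 <= i <= 2 * My - 1)%nat -> (1 <= j <= 2 * My - 1)%nat -> 0 < gy i j) ->
  (forall i, (1 <= i <= 2 * My - 1)%nat ->
     Rabs (dy i - gy i i) > sum1 (fun j => if Nat.eq_dec j i then 0 else Rabs (gy i j)) (2 * My - 1)) ->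
  let tau := T / INR N in
  let Cd := 4 * Rpower (b - a) (1 - gamma) * Rpower (d - c) (1 - gamma) / ((1 - gamma) ^ 2) in
  (forall k i p, (1 <= k <= N)%nat -> (1 <= i <= 2 * Mx - 1)%nat -> (1 <= p <= 2 * My - 1)%nat ->
     eps k i p + tau / 2 * Amul Mx My dx dy gx gy (eps k) i p
     = eps (k - 1)%nat i p - tau / 2 * Amul Mx My dx dy gx gy (eps (k - 1)%nat) i p) ->
  forall k, (k <= N)%nat ->
    normInf Mx My (eps k) <= exp (T * Cd) * normInf Mx My (eps 0%nat).
Proof.
  intros Hg Hab Hcd HMx HMy HT HN HDx HGx HDy HGy Hgx Hdomx Hgy Hdomy tau Cd Hcn k Hk.
  set (Bx := 2 * Rpower (b - a) (1 - gamma) / (1 - gamma)).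
  set (By := 2 * Rpower (d - c) (1 - gamma) / (1 - gamma)).
  assert (HCd : Cd = Bx * By) by (unfold Cd, Bx, By; field; lra).
  assert (HCd0 : 0 <= Cd).
  { rewrite HCd. apply Rmult_le_pos; apply Rlt_le, Rdiv_lt_0_compat;
      (apply Rmult_lt_0_compat; [lra | apply exp_pos]) || lra. }
  assert (Hrow_x : forall i, (1 <= i <= 2 * Mx - 1)%nat -> sum1 (gx i) (2 * Mx - 1) < dx i /\ dx i <= Bx)
    by (intros; apply collocation_row_bounds; auto with arith; intros; apply Rlt_le, Hgx; auto).
  assert (Hrow_y : forall p, (1 <= p <= 2 * My - 1)%nat -> sum1 (gy p) (2 * My - 1) < dy p /\ dy p <= By)
    by (intros; apply collocation_row_bounds; auto with arith; intros; apply Rlt_le, Hgy; auto).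
  assert (Hstep : forall k, (1 <= k <= N)%nat ->
            normInf Mx My (eps k) <= (1 + tau * Cd) * normInf Mx My (eps (k - 1)%nat)).
  { intros k' Hk'. rewrite HCd.
    apply (normInf_cn_step Mx My dx dy gx gy Bx By); try lia.
    - intros; apply Rlt_le, Hgx; assumption.
    - intros; apply Rlt_le, Hgy; assumption.
    - intros; apply Rlt_le, Hrow_x; assumption.
    - intros; apply Rlt_le, Hrow_y; assumption.
    - intros; apply Hrow_x; assumption.
    - intros; apply Hrow_y; assumption.
    - apply Rdiv_le_0_compat; [lra | apply lt_0_INR; lia].
    - intros; apply Hcn; assumption. }
  eapply Rle_trans.
  { apply (le_pow_of_step (fun k => normInf Mx My (eps k)) (1 + tau * Cd) N); try assumption.
    assert (0 <= tau) by (apply Rdiv_le_0_compat; [lra | apply lt_0_INR; lia]). nra. }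
  apply Rmult_le_compat_r; [apply normInf_ge0; lia|].
  apply pow_time_step_le_exp; lra || assumption.
Qed.
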